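(* For every $p\in[0,1/2)$, the noisy sorting capacity satisfies $C(p)\le 1-H(p)$.
   Context: Noisy sorting problem. Fix $p\in[0,1/2)$. Let $\theta_1,\ldots,\theta_n$ be distinct real numbers; their ordering is the permutation $\pi$ of $[n]$ with $\theta_{\pi(1)}<\cdots<\theta_{\pi(n)}$. At time step $k$ an agent submits a query $(U_k,V_k)=(\theta_i,\theta_j)$, $i\neq j$, and receives $Y_k=\mathbb{1}_{\{U_k<V_k\}}\oplus Z_k$, with $Z_k$ i.i.d. $\mathrm{Bern}(p)$ independent of everything else. An adaptive querying strategy is a causal (possibly randomized) rule $(U_k,V_k)=f_k(Y^{k-1},U^{k-1},V^{k-1})$ with a stopping time $M$ (number of queries) which may depend on the responses. An $(R,n)$ noisy sorting code consists of such a strategy and an estimator $\hat\Pi=\hat\pi(Y^M,U^M,V^M)$, with $\mathbb{E}[M]=\frac{n\log_2 n}{R}$. A rate $R$ is achievable if there is a sequence (indexed by $n$) of $(R,n)$ noisy sorting codes with $\lim_{n\to\infty}\max_\pi\mathbb{P}\{\hat\Pi\neq\pi\}=0$; $C(p)$ is the supremum of achievable rates. $H(p)=-p\log_2 p-(1-p)\log_2(1-p)$. *)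

From HB Require Import structures.
From mathcomp Require Import all_boot all_order all_algebra all_fingroup.
From mathcomp Require Import all_classical all_reals all_analysis.
Set Implicit Arguments. Unset Strict Implicit. Unset Printing Implicit Defensive.
Import Order.TTheory GRing.Theory Num.Theory.
Local Open Scope ring_scope.
Local Open Scope classical_set_scope.

Section NoisySorting.
Variable R : realType.

Definition log2 (x : R) : R := ln x / ln 2.

Definition binH (p : R) : R :=
  (if p == 0 then 0 else - p * log2 p) +
  (if 1 - p == 0 then 0 else - (1 - p) * log2 (1 - p)).

Variable n : nat.

(* one round of interaction: the queried pair of indices (i,j) and the
   noisy response Y *)
Definition event := ('I_n * 'I_n * bool)%type.

(* theta_{pi(1)} < ... < theta_{pi(n)}, so theta_i < theta_j iff the rank
   pi^-1 i of i is smaller than the rank of j *)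
Definition lessb (pi : 'S_n) (i j : 'I_n) : bool := (nat_of_ord ((pi^-1)%g i) < nat_of_ord ((pi^-1)%g j))%N.

Definition chan (p : R) (pi : 'S_n) (q : 'I_n * 'I_n) (y : bool) : R :=
  if y == lessb pi q.1 q.2 then 1 - p else p.

(* A (possibly randomized, causal) adaptive querying strategy with stopping
   rule, given as a behavioural strategy: after history h (the queries and
   responses so far), [act h None] is the probability of stopping and
   [act h (Some (i,j))] the probability of querying (theta_i, theta_j).
   [est] is the (deterministic) estimator applied to the full history. *)
Record strategy := Strategy {
  act : seq event -> option ('I_n * 'I_n) -> R;
  est : seq event -> 'S_n }.

Definition valid_strategy (S : strategy) : Prop :=
  forall h : seq event,
    (forall a, 0 <= act S h a) /\
    (\sum_(a : option ('I_n * 'I_n)) act S h a = 1) /\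
    (forall i : 'I_n, act S h (Some (i, i)) = 0).

(* probability that the interaction, started after history [past], produces
   the events [h] next (without stopping in between) *)
Fixpoint reachp (S : strategy) (p : R) (pi : 'S_n) (past h : seq event) : R :=
  match h with
  | [::] => 1
  | e :: t =>
      act S past (Some (e.1)) * chan p pi e.1 e.2 *
      reachp S p pi (rcons past e) t
  end.

Definition stop_prob (S : strategy) (p : R) (pi : 'S_n) (k : nat) : R :=
  \sum_(h : k.-tuple event) reachp S p pi [::] h * act S h None.

Definition err_prob (S : strategy) (p : R) (pi : 'S_n) (k : nat) : R :=
  \sum_(h : k.-tuple event | est S h != pi) reachp S p pi [::] h * act S h None.

Definition prob_stop (S : strategy) (p : R) (pi : 'S_n) : \bar R :=
  \sum_(0 <= k <oo) (stop_prob S p pi k)%:E.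

(* E[M] (over terminating runs; M < oo a.s. is required separately) *)
Definition expected_M (S : strategy) (p : R) (pi : 'S_n) : \bar R :=
  \sum_(0 <= k <oo) (k%:R * stop_prob S p pi k)%:E.

Definition P_error (S : strategy) (p : R) (pi : 'S_n) : \bar R :=
  \sum_(0 <= k <oo) (err_prob S p pi k)%:E.

Definition max_error (S : strategy) (p : R) : \bar R :=
  \big[Order.max/0%E]_(pi : 'S_n) P_error S p pi.

Definition sorting_code (p Rt : R) (S : strategy) : Prop :=
  valid_strategy S /\
  forall pi : 'S_n, prob_stop S p pi = 1%E /\
    expected_M S p pi = (n%:R * log2 n%:R / Rt)%:E.

End NoisySorting.

Definition achievable (R : realType) (p Rt : R) : Prop :=
  exists codes : forall n : nat, strategy R n,
    (forall n, sorting_code p Rt (codes n)) /\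
    ((fun n => max_error (codes n) p) @ \oo --> 0%E).

(* Put the uniform prior on the ordering and weigh every history h of the
   interaction by its total likelihood sum_pi P(h | pi); [info h] is that
   weight times the relative entropy of the posterior on 'S_n after h to the
   uniform law.  It vanishes on the empty history, and one more query raises
   its total over the histories of a given length by at most the capacity
   ln 2 - H(p) (in nats) of the binary symmetric channel times the probability
   that the run is still going.  When the run stops, Fano's inequality bounds
   [info] below by ln n! times the probability of a correct estimate, minus
   ln 2.  Summing over time gives ln n! (1 - P_err) - ln 2 <= (ln 2 - H(p)) E[M],
   and ln n! >= n ln n - n turns this into R <= 1 - H(p) as n grows. *)

From Pilot Require Import Defs.
From HB Require Import structures.
From mathcomp Require Import all_boot all_order all_algebra all_fingroup.
From mathcomp Require Import all_classical all_reals all_analysis.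
From mathcomp Require Import lra ring.
Set Implicit Arguments.
Unset Strict Implicit.
Unset Printing Implicit Defensive.
Import Order.TTheory GRing.Theory Num.Theory.
Local Open Scope ring_scope.
Local Open Scope classical_set_scope.

Lemma sum_option (V : nmodType) (T : finType) (F : option T -> V) :
  \sum_(a : option T) F a = F None + \sum_(x : T) F (Some x).
Proof.
rewrite (bigD1 None) //=; congr (_ + _).
rewrite (reindex_omap Some id) /=; last by case.
by apply: eq_bigl => x; rewrite eqxx.
Qed.

Lemma sum_pair (V : nmodType) (T U : finType) (F : T * U -> V) :
  \sum_(x : T * U) F x = \sum_(t : T) \sum_(u : U) F (t, u).
Proof. by rewrite pair_big; apply: eq_bigr => -[]. Qed.

Lemma sum_tuple_rcons (V : nmodType) (T : finType) k (F : seq T -> V) :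
  \sum_(t : k.+1.-tuple T) F t = \sum_(t : k.-tuple T) \sum_(x : T) F (rcons t x).
Proof.
rewrite pair_big /= (reindex (fun q : k.-tuple T * T => [tuple of rcons q.1 q.2])) //=.
exists (fun t : k.+1.-tuple T =>
   ([tuple of belast (thead t) (behead t)], last (thead t) (behead t))).
- move=> [t x] _ /=.
  have tx : rcons t x = thead [tuple of rcons t x] :: behead [tuple of rcons t x].
    exact: (congr1 val (tuple_eta [tuple of rcons t x])).
  have := lastI (thead [tuple of rcons t x]) (behead [tuple of rcons t x]).
  rewrite -tx => /rcons_inj [tE xE].
  congr pair; last exact: esym xE.
  by apply: val_inj; rewrite /= -tE.
- move=> t _; apply: val_inj => /=.
  by rewrite -lastI; exact: (esym (congr1 val (tuple_eta t))).
Qed.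

Lemma sum_fibers (V : nmodType) (T P : finType) (f : T -> P) (F : P -> T -> V) :
  \sum_(pi : P) \sum_(t | f t == pi) F pi t = \sum_t F (f t) t.
Proof.
rewrite (exchange_big_dep xpredT) //=; apply: eq_bigr => t _.
by rewrite (big_pred1 (f t)) // => pi; rewrite eq_sym.
Qed.

Lemma ler_sum_ord_widen (V : numDomainType) (f : nat -> V) K L : (K <= L)%N ->
  (forall k, (K <= k < L)%N -> 0 <= f k) -> \sum_(k < K) f k <= \sum_(k < L) f k.
Proof.
move=> KL f0; rewrite (big_ord_widen L f KL) big_mkcond ler_sum // => k _.
by case: ifP => // /negbT; rewrite -leqNgt => Kk; apply: f0; rewrite Kk ltn_ord.
Qed.

Lemma ler_of_forall_gt0 (V : numFieldType) (x y c : V) : 0 < c ->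
  (forall d, 0 < d -> x <= y + c * d) -> x <= y.
Proof.
move=> c0 H; apply/ler_addgt0Pr => e e0.
by have := H (e / c) (divr_gt0 e0 c0); rewrite mulrC divfK ?gt_eqF.
Qed.

Section Entropy.
Variable R : realType.

Definition natH (p : R) : R := - (p * ln p + (1 - p) * ln (1 - p)).

Lemma binH_ln2 (p : R) : p < 1 -> binH p * ln 2 = natH p.
Proof.
move=> p1.
have l2 : ln (2 : R) != 0 by rewrite gt_eqF // ln_gt0 // ltr1n.
rewrite /binH /natH /log2.
have -> : (1 - p == 0) = false by apply/negbTE; rewrite subr_eq0 eq_sym lt_eqF.
by case: (eqVneq p 0) => [->|p0] /=; field.
Qed.

Definition bsc_capacity (p : R) : R := ln 2 - natH p.

Lemma sub_le_mul_ln_div (x y : R) : 0 <= x -> 0 <= y -> (0 < x -> 0 < y) ->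
  x - y <= x * ln (x / y).
Proof.
move=> x0 y0 xy.
have [->|xn0] := eqVneq x 0; first by rewrite mul0r sub0r oppr_le0.
have xpos : 0 < x by rewrite lt0r xn0.
have yx_pos : 0 < y / x by rewrite divr_gt0 ?xy.
have := @le_ln1Dx R (y / x - 1) ltac:(lra).
rewrite addrC subrK -[x / y]invf_div lnV ?posrE // => lnyx.
have := ler_wpM2l x0 lnyx.
by rewrite mulrBr mulr1 mulrCA divff // mulr1 mulrN; lra.
Qed.

Lemma gibbs_ineq (I : finType) (a beta : I -> R) :
  (forall i, 0 <= a i) -> (forall i, 0 < beta i) -> \sum_i beta i = 1 ->
  0 <= \sum_i a i * ln (a i / (beta i * \sum_j a j)).
Proof.
move=> a0 beta0 beta1.
have a_le i : a i <= \sum_j a j by rewrite (bigD1 i) //= lerDl sumr_ge0.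
apply: le_trans (_ : \sum_i (a i - beta i * \sum_j a j) <= _).
  by rewrite sumrB -mulr_suml beta1 mul1r subrr.
apply: ler_sum => i _; apply: sub_le_mul_ln_div => //.
- by rewrite mulr_ge0 ?sumr_ge0 // ltW.
- by move=> ai; rewrite mulr_gt0 // (lt_le_trans ai).
Qed.

Lemma natH_le_ln2 (c : R) : 0 <= c <= 1 -> natH c <= ln 2.
Proof.
move=> /andP[c0 c1].
have half_bound (x : R) : 0 <= x -> x - 2^-1 - x * ln 2 <= x * ln x.
  move=> x0; have [->|xn0] := eqVneq x 0; first by rewrite !mul0r subr0; lra.
  have x_pos : 0 < x by rewrite lt0r xn0.
  have := @sub_le_mul_ln_div x 2^-1 x0 ltac:(lra) ltac:(lra).
  by rewrite invrK lnM ?posrE // mulrDr; lra.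
have := half_bound c c0; have := half_bound (1 - c) ltac:(lra).
by rewrite /natH; lra.
Qed.

Lemma bsc_capacity_ge0 (p : R) : 0 <= p <= 1 -> 0 <= bsc_capacity p.
Proof. by move/natH_le_ln2; rewrite /bsc_capacity subr_ge0. Qed.

Lemma bool_entropy_le (T : bool -> R) : (forall y, 0 <= T y) -> 0 < \sum_y T y ->
  - \sum_y T y * ln (T y / \sum_y T y) <= (\sum_y T y) * ln 2.
Proof.
move=> T0; set Sx := \sum_y T y => Sx_pos.
have T_sum : T true + T false = Sx by rewrite /Sx big_bool.
set c := T true / Sx.
have Tt : T true = Sx * c by rewrite /c mulrC divfK ?gt_eqF.
have Tf : T false = Sx * (1 - c) by rewrite mulrBr mulr1 -Tt -T_sum addrC addKr.
have c01 : 0 <= c <= 1.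
  apply/andP; split; first by rewrite divr_ge0 ?T0 ?ltW.
  by rewrite ler_pdivrMr // mul1r -T_sum lerDl T0.
have := ler_wpM2l (ltW Sx_pos) (natH_le_ln2 c01); rewrite /natH => hc.
rewrite big_bool /= -/c.
have -> : T false / Sx = 1 - c by rewrite Tf mulrC mulKf ?gt_eqF.
by rewrite Tt Tf; lra.
Qed.

(* Chain rule for one more query: [x], [a], [c] are the likelihood of the past,
   the probability of the query and that of the answer, [S] and [T] the total
   likelihoods before and after. *)
Lemma mul_ln_chain (x a c S T N : R) : 0 <= x -> 0 <= a -> 0 <= c -> 0 < N ->
  (0 < x -> 0 < S) -> (0 < x * c -> 0 < T) ->
  x * a * c * ln (x * a * c / (a * T / N)) =
  a * (x * c * ln (x / (S / N))) + a * (x * c * ln (c * S / T)).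
Proof.
move=> x0 a0 c0 N0 xS xcT.
have [->|xn0] := eqVneq x 0; first by rewrite !mul0r !mulr0 addr0.
have [->|an0] := eqVneq a 0; first by rewrite !mul0r !mulr0 !mul0r addr0.
have [->|cn0] := eqVneq c 0; first by rewrite !mulr0 !mul0r !mulr0 addr0.
have x_pos : 0 < x by rewrite lt0r xn0.
have a_pos : 0 < a by rewrite lt0r an0.
have c_pos : 0 < c by rewrite lt0r cn0.
have S_pos := xS x_pos.
have T_pos := xcT (mulr_gt0 x_pos c_pos).
rewrite -!mulrDr -lnM ?posrE ?divr_gt0 ?mulr_gt0 //.
have -> : x / (S / N) * (c * S / T) = x * a * c / (a * T / N).
  by field; rewrite !gt_eqF.
by ring.
Qed.

Lemma nneseries_partial_near (u : nat -> R) (x d : R) : (forall k, 0 <= u k) ->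
  (\sum_(0 <= k <oo) (u k)%:E)%E = x%:E -> 0 < d ->
  \forall K \near \oo, x - d < \sum_(k < K) u k.
Proof.
move=> u0 ux d0.
have cv : ((fun K => \sum_(0 <= k < K) (u k)%:E) @ \oo --> x%:E)%E.
  by rewrite -ux; apply: is_cvg_nneseries => k _ _; rewrite lee_fin.
have x_lt : x - d < x by rewrite ltrBlDr ltrDl.
have := cv _ (@nbhs_open_ereal_gt R x (fun r => r - d) x_lt).
move=> [N _ HN]; exists N => // K /HN /=.
by rewrite sumEFin lte_fin big_mkord.
Qed.

Lemma ln_fact_ge (m : nat) : m%:R * ln (m%:R : R) - m%:R <= ln (m`!%:R : R).
Proof.
elim: m => [|m IH]; first by rewrite mul0r subr0 fact0 ln1.
rewrite factS natrM lnM ?posrE ?ltr0n ?fact_gt0 //.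
have [->|m0] := eqVneq m 0%N; first by rewrite fact0 ln1 addr0 mul1r; lra.
have mpos : 0 < (m%:R : R) by rewrite ltr0n lt0n.
have ln_succ : m%:R * (ln (m.+1%:R : R) - ln m%:R) <= 1.
  rewrite -ln_div ?posrE ?ltr0n ?lt0n // -natr1 mulrDl divff ?gt_eqF // mul1r.
  have minv_pos : 0 < (m%:R : R)^-1 by rewrite invr_gt0.
  have := @le_ln1Dx R (m%:R^-1) ltac:(lra).
  by move/(ler_wpM2l (ltW mpos)); rewrite divff ?gt_eqF.
move: ln_succ; rewrite mulrBr -natr1 mulrDl mul1r; lra.
Qed.

Lemma ln_fact_ge_eps (m : nat) (e : R) : (0 < m)%N -> 0 < e <= 1 ->
  e^-1 <= ln m%:R -> (1 - 3 * e) * (m%:R * ln m%:R) <= ln m`!%:R * (1 - e) - ln 2.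
Proof.
move=> m0 /andP[e0 e1] lnm; set X := m%:R * ln (m%:R : R).
have m1 : 1 <= (m%:R : R) by rewrite ler1n.
have eln : 1 <= e * ln (m%:R : R).
  by have := ler_wpM2l (ltW e0) lnm; rewrite mulfV ?gt_eqF.
have m_le : m%:R <= e * X.
  by have := ler_wpM2l (ler0n R m) eln; rewrite mulr1 mulrCA.
have ln2_le : ln 2 <= e * X.
  have ln2_le1 : ln (2 : R) <= 1 by have := @le_ln1Dx R 1 ltac:(lra).
  have := ler_wpM2r (le_trans ler01 eln) m1; rewrite mul1r mulrCA -/X; lra.
have X_ge0 : 0 <= X by rewrite mulr_ge0 // (le_trans _ lnm) // invr_ge0 ltW.
have e1' : 0 <= 1 - e by lra.
have := ler_wpM2r e1' (ln_fact_ge m); have := ler_wpM2r e1' m_le.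
have := mulr_ge0 (mulr_ge0 (ltW e0) (ltW e0)) X_ge0.
by rewrite -/X; lra.
Qed.

Lemma binH_le1 (p : R) : 0 <= p < 1 -> binH p <= 1.
Proof.
move=> /andP[p0 p1].
have ln2_pos : 0 < ln (2 : R) by rewrite ln_gt0 // ltr1n.
rewrite -(ler_pM2r ln2_pos) mul1r binH_ln2 //.
by apply: natH_le_ln2; rewrite p0 ltW.
Qed.

End Entropy.

Section InformationBalance.
Variables (R : realType) (n : nat) (S : strategy R n) (p : R).
Hypotheses (HS : valid_strategy S) (p0 : 0 <= p) (p1 : p < 1).

Definition hist_prob (pi : 'S_n) (h : seq (event n)) : R := reachp S p pi [::] h.
Definition hist_mass (h : seq (event n)) : R := \sum_(pi : 'S_n) hist_prob pi h.
Definition nfact : R := n`!%:R.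

(* [hist_mass h / nfact] is the probability of h under the uniform prior, and
   [info h / nfact] is that probability times ln n! minus the entropy of the
   posterior. *)
Definition info (h : seq (event n)) : R :=
  \sum_(pi : 'S_n) hist_prob pi h * ln (hist_prob pi h / (hist_mass h / nfact)).

Lemma act_ge0 (h : seq (event n)) a : 0 <= Defs.act S h a.
Proof. by case: (HS h). Qed.

Lemma sum_act_Some (h : seq (event n)) :
  \sum_(q : 'I_n * 'I_n) Defs.act S h (Some q) = 1 - Defs.act S h None.
Proof. by case: (HS h) => _ [+ _]; rewrite sum_option => ?; lra. Qed.

Lemma chan_ge0 (pi : 'S_n) (q : 'I_n * 'I_n) y : 0 <= chan p pi q y.
Proof. by rewrite /chan; case: ifP => _ //; rewrite subr_ge0 ltW. Qed.

Lemma sum_chan (pi : 'S_n) (q : 'I_n * 'I_n) : \sum_(y : bool) chan p pi q y = 1.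
Proof. by rewrite big_bool /chan; case: (lessb pi q.1 q.2) => /=; lra. Qed.

Lemma sum_chan_ln (pi : 'S_n) (q : 'I_n * 'I_n) :
  \sum_(y : bool) chan p pi q y * ln (chan p pi q y) = - natH p.
Proof.
by rewrite big_bool /chan /natH opprK; case: (lessb pi q.1 q.2) => /=; rewrite addrC.
Qed.

Lemma reachp_ge0 (pi : 'S_n) (past h : seq (event n)) : 0 <= reachp S p pi past h.
Proof.
elim: h past => [|e t IH] past /=; first lra.
by rewrite !mulr_ge0 ?act_ge0 ?chan_ge0 ?IH.
Qed.

Lemma reachp_rcons (pi : 'S_n) (past h : seq (event n)) (e : event n) :
  reachp S p pi past (rcons h e) =
  reachp S p pi past h * Defs.act S (past ++ h) (Some e.1) * chan p pi e.1 e.2.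
Proof.
elim: h past => [|x t IH] past /=; first by rewrite cats0 !mulr1 mul1r.
by rewrite IH cat_rcons !mulrA.
Qed.

Lemma hist_prob_ge0 pi h : 0 <= hist_prob pi h.
Proof. exact: reachp_ge0. Qed.

Lemma hist_prob_rcons pi h (e : event n) : hist_prob pi (rcons h e) =
  hist_prob pi h * Defs.act S h (Some e.1) * chan p pi e.1 e.2.
Proof. by rewrite /hist_prob reachp_rcons. Qed.

Lemma hist_prob_le_mass pi h : hist_prob pi h <= hist_mass h.
Proof.
by rewrite /hist_mass (bigD1 pi) //= lerDl; apply: sumr_ge0 => *; apply: hist_prob_ge0.
Qed.

Lemma sum_act_chan (pi : 'S_n) (h : seq (event n)) :
  \sum_(e : event n) Defs.act S h (Some e.1) * chan p pi e.1 e.2 =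
  1 - Defs.act S h None.
Proof.
rewrite sum_pair -sum_act_Some; apply: eq_bigr => q _.
by rewrite /= -mulr_sumr sum_chan mulr1.
Qed.

Lemma nfact_gt0 : 0 < nfact.
Proof. by rewrite ltr0n fact_gt0. Qed.

Lemma nfact_ge2 : (1 < n)%N -> 2 <= nfact.
Proof. by move=> n1; rewrite (ler_nat R 2); apply: leq_trans n1 (fact_geq n). Qed.

Lemma sum_const_perm (c : R) : \sum_(pi : 'S_n) c = c * nfact.
Proof. by rewrite sumr_const card_Sn mulr_natr. Qed.

Lemma info_nil : info [::] = 0.
Proof.
rewrite /info /hist_mass /hist_prob /= !sum_const_perm !mul1r.
by rewrite divff ?gt_eqF ?nfact_gt0 // invr1 ln1 mul0r.
Qed.

Lemma info_ge0 h : 0 <= info h.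
Proof.
have := @gibbs_ineq R _ (hist_prob^~ h) (fun=> nfact^-1) (hist_prob_ge0^~ h).
rewrite sum_const_perm mulVf ?gt_eqF ?nfact_gt0 // invr_gt0 nfact_gt0.
move=> /(_ (fun=> isT) erefl); rewrite /info /hist_mass.
by under [X in _ -> _ <= X]eq_bigr do rewrite [_ / nfact]mulrC.
Qed.

Lemma info_fano h (e : 'S_n) : (1 < n)%N ->
  hist_prob e h * ln nfact - hist_mass h * ln 2 <= info h.
Proof.
move=> /nfact_ge2 N2.
pose beta pi : R := if pi == e then 2^-1 else (2 * (nfact - 1))^-1.
have beta_gt0 pi : 0 < beta pi.
  by rewrite /beta; case: eqP => _; rewrite invr_gt0 // mulr_gt0 //; lra.
have beta_sum : \sum_pi beta pi = 1.
  rewrite (bigD1 e) //= {1}/beta eqxx.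
  rewrite (eq_bigr (fun=> (2 * (nfact - 1))^-1)); last first.
    by move=> pi /negbTE; rewrite /beta => ->.
  rewrite sumr_const cardC1 card_Sn -[_ *+ _.-1]mulr_natr -subn1 natrB ?fact_gt0 //.
  rewrite -/nfact.
  by field; lra.
have ln_beta pi : (pi == e)%:R * ln nfact - ln 2 <= ln (beta pi * nfact).
  rewrite /beta; case: eqVneq => _ /=.
    by rewrite mul1r mulrC ln_div ?posrE ?nfact_gt0.
  rewrite mul0r sub0r -lnV ?posrE //.
  rewrite ler_ln ?posrE ?mulr_gt0 ?invr_gt0 ?nfact_gt0 //; try lra.
  have -> : (2 * (nfact - 1))^-1 * nfact = 2^-1 + (2 * (nfact - 1))^-1 by field; lra.
  by rewrite lerDl invr_ge0; lra.
have term pi : hist_prob pi h * ln (hist_prob pi h / (beta pi * hist_mass h)) +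
    hist_prob pi h * ((pi == e)%:R * ln nfact - ln 2) <=
    hist_prob pi h * ln (hist_prob pi h / (hist_mass h / nfact)).
  have [->|wn0] := eqVneq (hist_prob pi h) 0; first by rewrite !mul0r addr0.
  have w_pos : 0 < hist_prob pi h by rewrite lt0r wn0 hist_prob_ge0.
  have mass_pos : 0 < hist_mass h := lt_le_trans w_pos (hist_prob_le_mass pi h).
  have -> : hist_prob pi h / (hist_mass h / nfact) =
      hist_prob pi h / (beta pi * hist_mass h) * (beta pi * nfact).
    by field; rewrite !gt_eqF ?nfact_gt0.
  rewrite [ln (_ * (beta pi * nfact))]lnM ?posrE ?divr_gt0 ?mulr_gt0 ?nfact_gt0 //.
  by rewrite [in X in _ <= X]mulrDr lerD2l ler_wpM2l ?hist_prob_ge0.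
apply: le_trans (ler_sum _ (fun pi _ => term pi)).
have G := @gibbs_ineq R _ (hist_prob^~ h) beta (hist_prob_ge0^~ h) beta_gt0 beta_sum.
rewrite big_split /= -/(hist_mass h).
under [X in _ <= _ + X]eq_bigr do rewrite mulrBr mulrCA.
rewrite sumrB -mulr_suml -/(hist_mass h).
rewrite [X in _ + (X - _)](bigD1 e) //= eqxx mul1r.
rewrite [\sum_(i | i != e) _]big1 ?addr0; last first.
  by move=> pi /negbTE ->; rewrite mul0r.
by move: G; rewrite -/(hist_mass h); lra.
Qed.

(* The left side is [\sum_s x s] times the mutual information between the
   ordering, drawn with weights [x], and the answer to [q], which is
   H(answer) - H(p). *)
Lemma query_info_le (x : 'S_n -> R) (q : 'I_n * 'I_n) : (forall pi, 0 <= x pi) ->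
  \sum_(y : bool) \sum_pi x pi * chan p pi q y *
      ln (chan p pi q y * (\sum_s x s) / (\sum_s x s * chan p s q y))
  <= bsc_capacity p * \sum_s x s.
Proof.
move=> x0; set Sx := \sum_s x s; set T := fun y => \sum_s x s * chan p s q y.
have [Sx0|Sxn0] := eqVneq Sx 0.
  have xz := psumr_eq0P (fun i _ => x0 i) Sx0.
  rewrite Sx0 mulr0 big1 // => y _; rewrite big1 // => pi _.
  by rewrite xz // !mul0r.
have Sx_pos : 0 < Sx by rewrite lt0r Sxn0 sumr_ge0.
have T_ge pi y : x pi * chan p pi q y <= T y.
  rewrite /T (bigD1 pi) //= lerDl; apply: sumr_ge0 => i _.
  by rewrite mulr_ge0 ?x0 ?chan_ge0.
have termE y pi : x pi * chan p pi q y * ln (chan p pi q y * Sx / T y) =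
    x pi * (chan p pi q y * ln (chan p pi q y)) - x pi * chan p pi q y * ln (T y / Sx).
  have [->|xn0] := eqVneq (x pi) 0; first by rewrite !mul0r subrr.
  have [->|cn0] := eqVneq (chan p pi q y) 0; first by rewrite !(mulr0, mul0r, subr0).
  have x_pos : 0 < x pi by rewrite lt0r xn0 x0.
  have c_pos : 0 < chan p pi q y by rewrite lt0r cn0 chan_ge0.
  have T_pos : 0 < T y by apply: lt_le_trans (T_ge pi y); rewrite mulr_gt0.
  rewrite -[chan p pi q y * Sx / T y]mulrA -invf_div.
  rewrite [ln (_ / (_ / _))]ln_div ?posrE ?divr_gt0 //.
  by rewrite mulrBr mulrA.
have T_sum : \sum_y T y = Sx.
  rewrite /T exchange_big /=; apply: eq_bigr => s _.
  by rewrite -mulr_sumr sum_chan mulr1.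
have T0 y : 0 <= T y by apply: sumr_ge0 => s _; rewrite mulr_ge0 ?x0 ?chan_ge0.
have := bool_entropy_le T0; rewrite T_sum => /(_ Sx_pos); rewrite /T /= => HY.
under eq_bigr do under eq_bigr do rewrite termE.
under eq_bigr do rewrite sumrB.
rewrite sumrB exchange_big /=.
under eq_bigr do rewrite -mulr_sumr sum_chan_ln.
under [X in _ - X <= _]eq_bigr => y _ do rewrite -mulr_suml.
by rewrite -mulr_suml -/Sx /bsc_capacity; lra.
Qed.

Lemma info_step (h : seq (event n)) :
  \sum_(e : event n) info (rcons h e) <=
  (1 - Defs.act S h None) * info h +
  bsc_capacity p * ((1 - Defs.act S h None) * hist_mass h).
Proof.
set T := fun q y => \sum_s hist_prob s h * chan p s q y.
have T_ge pi q y : hist_prob pi h * chan p pi q y <= T q y.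
  rewrite /T (bigD1 pi) //= lerDl; apply: sumr_ge0 => i _.
  by rewrite mulr_ge0 ?hist_prob_ge0 ?chan_ge0.
have mass_rcons q y : hist_mass (rcons h (q, y)) = Defs.act S h (Some q) * T q y.
  rewrite /hist_mass mulr_sumr; apply: eq_bigr => s _.
  by rewrite hist_prob_rcons /=; ring.
set A := fun q y => \sum_pi hist_prob pi h * chan p pi q y *
  ln (hist_prob pi h / (hist_mass h / nfact)).
set B := fun q y => \sum_pi hist_prob pi h * chan p pi q y *
  ln (chan p pi q y * hist_mass h / T q y).
have infoE q y : info (rcons h (q, y)) =
    Defs.act S h (Some q) * A q y + Defs.act S h (Some q) * B q y.
  rewrite /info /A /B !mulr_sumr -big_split /=; apply: eq_bigr => pi _.
  rewrite hist_prob_rcons mass_rcons /=.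
  apply: mul_ln_chain; rewrite ?hist_prob_ge0 ?act_ge0 ?chan_ge0 ?nfact_gt0 //.
    by move=> w_pos; apply: lt_le_trans w_pos (hist_prob_le_mass pi h).
  by move=> wc_pos; apply: lt_le_trans wc_pos (T_ge pi q y).
have sumA q : \sum_y A q y = info h.
  rewrite /A exchange_big /=; apply: eq_bigr => pi _.
  under eq_bigr do rewrite mulrAC.
  by rewrite -mulr_sumr sum_chan mulr1.
have sumB q : \sum_y B q y <= bsc_capacity p * hist_mass h.
  exact: (query_info_le q (hist_prob_ge0^~ h)).
rewrite sum_pair.
under eq_bigr do under eq_bigr do rewrite infoE.
under eq_bigr do rewrite big_split /= -!mulr_sumr sumA.
rewrite big_split /= -mulr_suml sum_act_Some lerD2l.
rewrite mulrCA -sum_act_Some mulr_suml.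
by apply: ler_sum => q _; rewrite ler_wpM2l ?act_ge0.
Qed.

Definition info_at k := \sum_(h : k.-tuple (event n)) info h.

Definition stop_info k := \sum_(h : k.-tuple (event n)) Defs.act S h None * info h.

Definition live_mass k :=
  \sum_(h : k.-tuple (event n)) (1 - Defs.act S h None) * hist_mass h.

Definition surv pi k := \sum_(h : k.-tuple (event n)) hist_prob pi h.

Lemma info_at0 : info_at 0 = 0.
Proof. by rewrite /info_at big1 // => h _; rewrite tuple0 info_nil. Qed.

Lemma info_at_ge0 k : 0 <= info_at k.
Proof. by apply: sumr_ge0 => h _; apply: info_ge0. Qed.

Lemma info_at_succ k :
  info_at k.+1 <= info_at k - stop_info k + bsc_capacity p * live_mass k.
Proof.
rewrite /info_at sum_tuple_rcons.
apply: le_trans; first by apply: ler_sum => h _; apply: info_step.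
rewrite big_split /= -mulr_sumr /stop_info /live_mass -sumrB.
by under eq_bigr do rewrite mulrBl mul1r.
Qed.

Lemma sum_stop_info_le K :
  \sum_(k < K) stop_info k <= bsc_capacity p * \sum_(k < K) live_mass k.
Proof.
suff : info_at K + \sum_(k < K) stop_info k <= bsc_capacity p * \sum_(k < K) live_mass k.
  by have := info_at_ge0 K; lra.
elim: K => [|K IH]; first by rewrite !big_ord0 info_at0 mulr0 addr0.
by rewrite !big_ord_recr /= mulrDr; have := info_at_succ K; lra.
Qed.

Lemma stop_info_ge k : (1 < n)%N ->
  ln nfact * \sum_pi (stop_prob S p pi k - err_prob S p pi k)
    - ln 2 * \sum_pi stop_prob S p pi k <= stop_info k.
Proof.
move=> n1.
have -> : \sum_pi stop_prob S p pi k =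
    \sum_(h : k.-tuple (event n)) Defs.act S h None * hist_mass h.
  rewrite /stop_prob exchange_big /=; apply: eq_bigr => h _.
  by rewrite /hist_mass mulr_sumr; apply: eq_bigr => pi _; rewrite mulrC.
have -> : \sum_pi (stop_prob S p pi k - err_prob S p pi k) =
    \sum_(h : k.-tuple (event n)) Defs.act S h None * hist_prob (est S h) h.
  transitivity (\sum_pi \sum_(h : k.-tuple (event n) | est S h == pi)
      hist_prob pi h * Defs.act S h None).
    apply: eq_bigr => pi _; rewrite /stop_prob /err_prob.
    rewrite (bigID (fun h : k.-tuple (event n) => est S h != pi)) /=.
    by rewrite addrAC subrr add0r; apply: eq_bigl => h; rewrite negbK.
  rewrite (sum_fibers (fun h : k.-tuple (event n) => est S h)
    (fun pi h => hist_prob pi h * Defs.act S h None)).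
  by apply: eq_bigr => h _; rewrite mulrC.
rewrite !mulr_sumr -sumrB; apply: ler_sum => h _.
have := ler_wpM2l (act_ge0 h None) (info_fano h (est S h) n1).
by rewrite mulrBr; lra.
Qed.

Lemma stop_prob_ge0 pi k : 0 <= stop_prob S p pi k.
Proof. by apply: sumr_ge0 => h _; rewrite mulr_ge0 ?reachp_ge0 ?act_ge0. Qed.

Lemma err_prob_ge0 pi k : 0 <= err_prob S p pi k.
Proof. by apply: sumr_ge0 => h _; rewrite mulr_ge0 ?reachp_ge0 ?act_ge0. Qed.

Lemma surv_ge0 pi k : 0 <= surv pi k.
Proof. by apply: sumr_ge0 => h _; apply: hist_prob_ge0. Qed.

Lemma surv_succ pi k : surv pi k.+1 = surv pi k - stop_prob S p pi k.
Proof.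
rewrite /surv sum_tuple_rcons /stop_prob -sumrB; apply: eq_bigr => h _.
under eq_bigr do rewrite hist_prob_rcons -mulrA.
by rewrite -mulr_sumr sum_act_chan /hist_prob; ring.
Qed.

Lemma surv_eq pi k : surv pi k = 1 - \sum_(j < k) stop_prob S p pi j.
Proof.
elim: k => [|k IH].
  rewrite big_ord0 subr0 /surv (big_pred1 [tuple]) // => h /=.
  by apply/esym/eqP/val_inj/size0nil; rewrite size_tuple.
by rewrite surv_succ IH big_ord_recr /= opprD addrA.
Qed.

Lemma surv_le pi j k : (j <= k)%N -> surv pi k <= surv pi j.
Proof.
move=> jk; rewrite !surv_eq lerD2l lerN2.
by apply: ler_sum_ord_widen => // i _; apply: stop_prob_ge0.
Qed.

Lemma live_mass_eq k : live_mass k = \sum_pi surv pi k.+1.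
Proof.
rewrite /surv; under eq_bigr do rewrite sum_tuple_rcons.
rewrite exchange_big /live_mass; apply: eq_bigr => h _.
rewrite /hist_mass mulr_sumr; apply: eq_bigr => pi _.
under eq_bigr do rewrite hist_prob_rcons -mulrA.
by rewrite -mulr_sumr sum_act_chan mulrC.
Qed.

Lemma sum_surv_eq pi L : \sum_(k < L) surv pi k.+1 =
  \sum_(j < L) j%:R * stop_prob S p pi j + L%:R * surv pi L.
Proof.
elim: L => [|L IH]; first by rewrite !big_ord0 mul0r addr0.
by rewrite !big_ord_recr /= IH surv_succ -natr1; ring.
Qed.

Lemma sum_surv_le pi E : prob_stop S p pi = 1%E -> expected_M S p pi = E%:E ->
  forall K, \sum_(k < K) surv pi k.+1 <= E.
Proof.
move=> stop1 expE K; apply/ler_addgt0Pr => d d0.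
have K1_pos : 0 < K%:R + 1 :> R by rewrite ltr_wpDl.
have [L KL survL] : exists2 L, (K <= L)%N & surv pi L <= d / (K%:R + 1).
  have [N _ HN] := nneseries_partial_near (stop_prob_ge0 pi) stop1 (divr_gt0 d0 K1_pos).
  exists (maxn K N); first exact: leq_maxl.
  by rewrite surv_eq; have := HN _ (leq_maxr K N); lra.
have head_le : \sum_(k < K) (surv pi k.+1 - surv pi L) <=
    \sum_(k < L) (surv pi k.+1 - surv pi L).
  apply: (@ler_sum_ord_widen _ (fun k => surv pi k.+1 - surv pi L)) => // k /andP[_ kL].
  by rewrite subr_ge0; apply: surv_le.
have moments_le : \sum_(j < L) j%:R * stop_prob S p pi j <= E.
  rewrite -lee_fin -expE.
  have := @nneseries_lim_ge R (fun j => (j%:R * stop_prob S p pi j)%:E) xpredT 0 L.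
  by rewrite sumEFin big_mkord; apply => j _ _; rewrite lee_fin mulr_ge0 ?stop_prob_ge0.
have tail_le : K%:R * surv pi L <= d.
  apply: (le_trans (ler_wpM2l (ler0n R K) survL)).
  by rewrite mulrA ler_pdivrMr //; lra.
move: head_le; rewrite !sumrB (sum_surv_eq pi L) !sumr_const !card_ord.
rewrite -[surv pi L *+ K]mulr_natr -[surv pi L *+ L]mulr_natr.
by lra.
Qed.

Lemma horizon_bound K : (1 < n)%N ->
  ln nfact * \sum_pi \sum_(k < K) (stop_prob S p pi k - err_prob S p pi k)
    - ln 2 * \sum_pi \sum_(k < K) stop_prob S p pi k
  <= bsc_capacity p * \sum_pi \sum_(k < K) surv pi k.+1.
Proof.
move=> n1.
have -> : \sum_pi \sum_(k < K) surv pi k.+1 = \sum_(k < K) live_mass k.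
  by rewrite exchange_big; apply: eq_bigr => k _; rewrite live_mass_eq.
apply: le_trans (sum_stop_info_le K).
apply: le_trans; last by apply: ler_sum => k _; apply: stop_info_ge.
rewrite sumrB -!mulr_sumr [\sum_(k < K) \sum_pi (_ - _)]exchange_big.
by rewrite [\sum_(k < K) \sum_pi _]exchange_big.
Qed.

Lemma converse_bound (E eps : R) : (1 < n)%N ->
  (forall pi, prob_stop S p pi = 1%E) -> (forall pi, expected_M S p pi = E%:E) ->
  (forall pi, (P_error S p pi <= eps%:E)%E) ->
  ln nfact * (1 - eps) - ln 2 <= bsc_capacity p * E.
Proof.
move=> n1 stop1 expE err_le.
have lnN_pos : 0 < ln nfact by rewrite ln_gt0 //; have := nfact_ge2 n1; lra.
have cap_ge0 : 0 <= bsc_capacity p by rewrite bsc_capacity_ge0 // p0 ltW.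
have ln2_ge0 : 0 <= ln (2 : R) by rewrite ln_ge0 // ler1n.
apply: (ler_of_forall_gt0 lnN_pos) => d d0.
have [K stopK] : exists K, forall pi, 1 - d <= \sum_(k < K) stop_prob S p pi k.
  have := filter_forall _
    (fun pi => nneseries_partial_near (stop_prob_ge0 pi) (stop1 pi) d0).
  by case=> N _ HN; exists N => pi; apply/ltW/(HN N (leqnn N)).
have errK pi : \sum_(k < K) err_prob S p pi k <= eps.
  rewrite -lee_fin; apply: le_trans (err_le pi).
  have := @nneseries_lim_ge R (fun k => (err_prob S p pi k)%:E) xpredT 0 K.
  by rewrite sumEFin big_mkord; apply => k _ _; rewrite lee_fin err_prob_ge0.
have correct_ge : (1 - d - eps) * nfact <=
    \sum_pi \sum_(k < K) (stop_prob S p pi k - err_prob S p pi k).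
  rewrite -sum_const_perm; apply: ler_sum => pi _.
  by rewrite sumrB; have := stopK pi; have := errK pi; lra.
have stop_le : \sum_pi \sum_(k < K) stop_prob S p pi k <= 1 * nfact.
  rewrite -sum_const_perm; apply: ler_sum => pi _.
  by have := surv_ge0 pi K; rewrite surv_eq; lra.
have surv_le_E : \sum_pi \sum_(k < K) surv pi k.+1 <= E * nfact.
  by rewrite -sum_const_perm; apply: ler_sum => pi _; apply: sum_surv_le.
have := horizon_bound K n1.
have := ler_wpM2l (ltW lnN_pos) correct_ge.
have := ler_wpM2l ln2_ge0 stop_le.
have := ler_wpM2l cap_ge0 surv_le_E.
by move=> ? ? ? ?; rewrite -(ler_pM2r nfact_gt0); lra.
Qed.

End InformationBalance.

Lemma code_rate_le (R : realType) (p Rt eta : R) n (S : strategy R n) :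
  0 <= p -> p < 1 -> 0 < Rt -> (1 < n)%N -> sorting_code p Rt S ->
  (max_error S p <= eta%:E)%E ->
  Rt * (ln n`!%:R * (1 - eta) - ln 2) <= (1 - binH p) * (n%:R * ln n%:R).
Proof.
move=> p0 p1 Rt0 n1 [S_valid S_code] err_le.
have err_pi pi : (P_error S p pi <= eta%:E)%E.
  exact: le_trans (le_bigmax 0%E (P_error S p) pi) err_le.
have := converse_bound S_valid p0 p1 n1
  (fun pi => (S_code pi).1) (fun pi => (S_code pi).2) err_pi.
have ln2_pos : 0 < ln (2 : R) by rewrite ln_gt0 // ltr1n.
have -> : bsc_capacity p * (n%:R * log2 n%:R / Rt) = (1 - binH p) * (n%:R * ln n%:R) / Rt.
  by rewrite /bsc_capacity -binH_ln2 // /log2; field; rewrite !gt_eqF.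
by rewrite ler_pdivlMr // mulrC.
Qed.

Lemma achievable_rate_le (R : realType) (p Rt eta : R) : 0 <= p -> p < 1 -> 0 < Rt ->
  0 < eta -> achievable p Rt -> Rt * (1 - 3 * eta) <= 1 - binH p.
Proof.
move=> p0 p1 Rt0 eta0 [codes [codesP codes_err]].
have H_le1 : 0 <= 1 - binH p by rewrite subr_ge0 binH_le1 // p0.
have [eta_big|eta_small] := lerP 1 eta.
  by apply: le_trans H_le1; rewrite pmulr_rle0 //; lra.
have err_near : \forall m \near \oo, (max_error (codes m) p <= eta%:E)%E.
  have [N _ HN] := codes_err _ (@nbhs_open_ereal_lt R 0 (fun=> eta) eta0).
  by exists N => // m /HN /ltW.
have ln_near : \forall m \near \oo, eta^-1 <= ln (m%:R : R).
  have inv_ge0 : 0 <= expR eta^-1 by apply: expR_ge0.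
  exists (Num.Def.archi_bound (expR eta^-1)) => // m /= M_le.
  have m_gt : expR eta^-1 < m%:R.
    by apply: (lt_le_trans (archi_boundP inv_ge0)); rewrite ler_nat.
  rewrite -[X in X <= _]expRK ler_ln ?posrE ?expR_gt0 ?(lt_trans (expR_gt0 _) m_gt) //.
  exact: ltW.
near \oo => m.
have m1 : (1 < m)%N by near: m; apply: nbhs_infty_gt.
have lnm : eta^-1 <= ln (m%:R : R) by near: m; exact: ln_near.
have errm : (max_error (codes m) p <= eta%:E)%E by near: m; exact: err_near.
have X_pos : 0 < m%:R * ln (m%:R : R).
  by rewrite mulr_gt0 ?ltr0n 1?ltnW // (lt_le_trans _ lnm) // invr_gt0.
have rate := code_rate_le p0 p1 Rt0 m1 (codesP m) errm.
have eta01 : 0 < eta <= 1 by rewrite eta0 ltW.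
rewrite -(ler_pM2r X_pos) -mulrA; apply: le_trans rate.
by apply: ler_wpM2l; [exact: ltW | exact: ln_fact_ge_eps (ltnW m1) eta01 lnm].
Unshelve. all: by end_near.
Qed.

Theorem theorem3 (R : realType) (p : R) (hp0 : 0 <= p) (hp1 : p < 1 / 2) :
  forall Rt : R, achievable p Rt -> Rt <= 1 - binH p.
Proof.
move=> Rt achRt.
have p1 : p < 1 by lra.
have [Rt_le0|Rt_pos] := lerP Rt 0.
  by apply: le_trans Rt_le0 _; rewrite subr_ge0 binH_le1 // hp0.
have Rt3_pos : 0 < 3 * Rt by rewrite mulr_gt0.
apply: (ler_of_forall_gt0 Rt3_pos) => eta eta0.
by have := achievable_rate_le hp0 p1 Rt_pos eta0 achRt; lra.
Qed.
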